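(* For real $a$ and $t>0$, $$K_0(t)\,\operatorname{ber}(a\sqrt{t})=\int_0^{\infty}(1+y^2)^{-1/2}J_0\!\left(\frac14\frac{a^2}{1+y^2}\right)\cosh\!\left(\frac14\frac{a^2y}{1+y^2}\right)\cos(ty)\,dy .$$
   Context: $K_0$ is the Macdonald function and $J_0$ the Bessel function of order $0$. The Kelvin function $\operatorname{ber}(x)=\sum_{k\ge0}\frac{(-1)^k (x/2)^{4k}}{((2k)!)^2}$. *)

From Stdlib Require Import Reals Factorial.
From Coquelicot Require Import Coquelicot.
Open Scope R_scope.

Definition J0 (x : R) : R :=
  Series (fun k : nat => (-1) ^ k * (x / 2) ^ (2 * k) / (INR (fact k)) ^ 2).

Definition ber (x : R) : R :=
  Series (fun k : nat => (-1) ^ k * (x / 2) ^ (4 * k) / (INR (fact (2 * k))) ^ 2).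

Definition K0 (t : R) : R :=
  RInt_gen (fun u => exp (- t * cosh u)) (at_point 0) (Rbar_locally p_infty).

Definition rhs_integrand (a t y : R) : R :=
  / sqrt (1 + y ^ 2)
  * J0 (/ 4 * (a ^ 2 / (1 + y ^ 2)))
  * cosh (/ 4 * (a ^ 2 * y / (1 + y ^ 2)))
  * cos (t * y).

(* Write z = a^2/4 and G(y) = (1+y^2)^(-1/2).  The coefficients T_n(y) of x^n in
   J0(x) exp(-xy) satisfy a three-term recurrence saying exactly that the n-th
   derivative of G is n!^2 T_n(y) (1+y^2)^(-n) G(y).  Hence the factor
   G(y) J0(z/(1+y^2)) cosh(zy/(1+y^2)) of the integrand is
   sum_k z^(2k)/((2k)!)^2 G^(2k)(y), uniformly in y, since |G^(n)| <= n! 2^n G.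
   Integrating by parts twice, and using that the odd derivatives of the even
   function G vanish at 0,
     int_0^Y G^(2k)(y) cos(ty) dy = (-t^2)^k int_0^Y G(y) cos(ty) dy + O(1/Y),
   and sum_k z^(2k)/((2k)!)^2 (-t^2)^k = ber(a sqrt t).  Finally
   int_0^oo G(y) cos(ty) dy = int_0^oo cos(t sinh u) du = K_0(t), by moving the
   path of integration from Im u = 0 to Im u = pi/2. *)

From Stdlib Require Import Reals Factorial Lra Lia Classical.
From Coquelicot Require Import Coquelicot.
Open Scope R_scope.

Lemma is_lim_seq_sum_f_R0 (u : nat -> R) (l : R) :
  is_series u l -> is_lim_seq (fun n => sum_f_R0 u n) l.
Proof. intros H. apply is_lim_seq_ext with (sum_n u); [intros; apply sum_n_Reals | exact H]. Qed.

Lemma sum_f_R0_last_0 (f : nat -> R) (N : nat) :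
  f (S N) = 0 -> sum_f_R0 f (S N) = sum_f_R0 f N.
Proof. intros H. rewrite tech5, H. ring. Qed.

Lemma sum_f_R0_opp (f : nat -> R) (N : nat) :
  - sum_f_R0 f N = sum_f_R0 (fun i => - f i) N.
Proof. induction N as [|N IH]; simpl; [ring | rewrite <- IH; ring]. Qed.

Lemma is_series_even_part (u : nat -> R) (l : R) :
  is_series u l -> (forall k, u (2 * k + 1)%nat = 0) ->
  is_series (fun k => u (2 * k)%nat) l.
Proof.
  intros Hu Hodd.
  assert (Hsum : forall K, sum_f_R0 (fun k => u (2 * k)%nat) K = sum_f_R0 u (2 * K + 1)).
  { induction K as [|K IH].
    - pose proof (Hodd 0%nat) as H0. simpl in *. rewrite H0. ring.
    - replace (2 * S K + 1)%nat with (S (S (2 * K + 1))) by lia.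
      rewrite !tech5, IH.
      replace (S (S (2 * K + 1))) with (2 * S K + 1)%nat by lia.
      replace (S (2 * K + 1)) with (2 * S K)%nat by lia.
      rewrite Hodd. ring. }
  unfold is_series in *.
  apply (filterlim_ext (fun K => sum_n u (2 * K + 1))); [intros; rewrite !sum_n_Reals; symmetry; apply Hsum|].
  apply (filterlim_comp _ _ _ (fun K => (2 * K + 1)%nat) (sum_n u) eventually eventually).
  - apply eventually_subseq. intros; lia.
  - exact Hu.
Qed.

Lemma is_series_tail_le (u v : nat -> R) (lu lv : R) (K : nat) :
  is_series u lu -> is_series v lv -> (forall k, Rabs (u k) <= v k) ->
  Rabs (lu - sum_f_R0 u K) <= lv - sum_f_R0 v K.
Proof.
  intros Hu Hv Huv.
  assert (Hd : forall d, Rabs (sum_f_R0 u (K + d) - sum_f_R0 u K)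
                         <= sum_f_R0 v (K + d) - sum_f_R0 v K).
  { induction d as [|d IH].
    - rewrite Nat.add_0_r, !Rminus_eq_0, Rabs_R0. lra.
    - replace (K + S d)%nat with (S (K + d)) by lia. rewrite !tech5.
      pose proof (Rabs_triang (sum_f_R0 u (K + d) - sum_f_R0 u K) (u (S (K + d)))).
      pose proof (Huv (S (K + d))).
      replace (sum_f_R0 u (K + d) + u (S (K + d)) - sum_f_R0 u K)
        with (sum_f_R0 u (K + d) - sum_f_R0 u K + u (S (K + d))) by ring.
      lra. }
  assert (R : Rbar_le (Rbar_abs (lu - sum_f_R0 u K)) (lv - sum_f_R0 v K)).
  { apply (is_lim_seq_le_loc (fun M => Rabs (sum_f_R0 u M - sum_f_R0 u K))
                             (fun M => sum_f_R0 v M - sum_f_R0 v K)).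
    - exists K. intros M HM. replace M with (K + (M - K))%nat by lia. apply Hd.
    - apply is_lim_seq_abs, is_lim_seq_minus'.
      + apply is_lim_seq_sum_f_R0, Hu.
      + apply is_lim_seq_const.
    - apply is_lim_seq_minus'.
      + apply is_lim_seq_sum_f_R0, Hv.
      + apply is_lim_seq_const. }
  exact R.
Qed.

Lemma is_series_exp (x : R) : is_series (fun n => x ^ n / INR (fact n)) (exp x).
Proof.
  eapply is_series_ext; [|apply (is_exp_Reals x)].
  intros n. unfold scal, mult; simpl. rewrite pow_n_pow. reflexivity.
Qed.

Lemma ex_series_abs_exp_bounded (u : nat -> R) (c : R) :
  (forall n, Rabs (u n) * INR (fact n) <= c ^ n) -> ex_series (fun n => Rabs (u n)).
Proof.
  intros Hu.
  apply (@ex_series_le R_AbsRing R_CompleteNormedModule _ (fun n => c ^ n / INR (fact n)));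
    [|exists (exp c); apply is_series_exp].
  intros n. change (Rabs (Rabs (u n)) <= c ^ n / INR (fact n)).
  rewrite Rabs_Rabsolu. pose proof (INR_fact_lt_0 n).
  apply (Rmult_le_reg_r (INR (fact n))); [lra|].
  unfold Rdiv. rewrite Rmult_assoc, Rinv_l, Rmult_1_r; [apply Hu | lra].
Qed.

Lemma is_series_cosh (x : R) :
  is_series (fun k => x ^ (2 * k) / INR (fact (2 * k))) (cosh x).
Proof.
  pose proof (is_series_scal (/ 2) _ _
    (is_series_plus _ _ _ _ (is_series_exp x) (is_series_exp (- x)))) as H.
  apply is_series_even_part in H.
  - eapply is_series_ext; [|replace (cosh x) with (/ 2 * (exp x + exp (- x)))
                               by (unfold cosh; field); exact H].
    intros k. change (/ 2 * (x ^ (2 * k) / INR (fact (2 * k)) + (- x) ^ (2 * k) / INR (fact (2 * k)))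
                      = x ^ (2 * k) / INR (fact (2 * k))).
    replace (- x) with (-1 * x) by ring. rewrite Rpow_mult_distr, pow_1_even. field.
    apply INR_fact_neq_0.
  - intros k. change (/ 2 * (x ^ (2 * k + 1) / INR (fact (2 * k + 1))
                             + (- x) ^ (2 * k + 1) / INR (fact (2 * k + 1))) = 0).
    replace (- x) with (-1 * x) by ring.
    replace (2 * k + 1)%nat with (S (2 * k)) by lia.
    rewrite Rpow_mult_distr, pow_1_odd. field. apply INR_fact_neq_0.
Qed.

Lemma sum_f_R0_cosh_le (x : R) (K : nat) :
  0 <= x -> sum_f_R0 (fun k => x ^ (2 * k) / INR (fact (2 * k))) K <= cosh x.
Proof.
  intros Hx. apply is_lim_seq_incr_compare.
  - apply is_lim_seq_sum_f_R0, is_series_cosh.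
  - intros n. rewrite tech5.
    assert (0 <= x ^ (2 * S n) / INR (fact (2 * S n)))
      by (apply Rdiv_le_0_compat; [apply pow_le, Hx | apply INR_fact_lt_0]).
    lra.
Qed.

Lemma is_derive_sum_f_R0 (f : nat -> R -> R) (df : nat -> R) (y : R) (N : nat) :
  (forall i, (i <= N)%nat -> is_derive (f i) y (df i)) ->
  is_derive (fun x => sum_f_R0 (fun i => f i x) N) y (sum_f_R0 df N).
Proof.
  induction N as [|N IH]; intros H; simpl.
  - apply H. lia.
  - apply (is_derive_plus (fun x => sum_f_R0 (fun i => f i x) N) (f (S N))).
    + apply IH. intros; apply H; lia.
    + apply H; lia.
Qed.

Lemma is_lim_p_infty_of_nondecreasing (f : R -> R) (B : R) :
  (forall x y, x <= y -> f x <= f y) -> (forall x, f x <= B) ->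
  exists L : R, is_lim f p_infty L.
Proof.
  intros Hmono Hbound.
  destruct (completeness (fun v => exists x, v = f x)) as [L [Hub Hlub]].
  - exists B. intros v [x ->]. apply Hbound.
  - exists (f 0), 0. reflexivity.
  - exists L. apply is_lim_spec. intros eps.
    destruct (classic (exists x, L - eps < f x)) as [[x Hx] | Hnone].
    + exists x. intros y Hy. assert (f x <= f y) by (apply Hmono; lra).
      assert (f y <= L) by (apply Hub; exists y; reflexivity).
      apply Rabs_lt_between'. pose proof (cond_pos eps). lra.
    + exfalso. assert (L <= L - eps).
      { apply Hlub. intros v [x ->]. apply Rnot_lt_le. intros Hlt. apply Hnone. exists x. exact Hlt. }
      pose proof (cond_pos eps). lra.
Qed.

Lemma is_lim_p_infty_0_of_le_inv (f : R -> R) (c : R) :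
  (forall x, 0 < x -> Rabs (f x) <= c / x) -> is_lim f p_infty 0.
Proof.
  intros Hf.
  assert (Hinv : is_lim (fun x => c * / x) p_infty 0).
  { replace (Finite 0) with (Rbar_mult c (Rbar_inv p_infty)) by (simpl; f_equal; ring).
    apply is_lim_scal_l, is_lim_inv; [apply is_lim_id | discriminate]. }
  apply (is_lim_le_le_loc (fun x => - (c * / x)) (fun x => c * / x)).
  - exists 0. intros x Hx. apply Rabs_le_between, Hf, Hx.
  - replace (Finite 0) with (Rbar_opp 0) by (simpl; f_equal; ring). apply is_lim_opp, Hinv.
  - exact Hinv.
Qed.

Lemma is_RInt_gen_p_infty_of_is_lim (f : R -> R) (a L : R) :
  (forall b, ex_RInt f a b) -> is_lim (fun b => RInt f a b) p_infty L ->
  is_RInt_gen f (at_point a) (Rbar_locally p_infty) L.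
Proof.
  intros Hex Hlim. unfold is_RInt_gen, filterlimi, filter_le, filtermapi.
  intros P [eps HP].
  destruct (proj2 (is_lim_spec _ _ _) Hlim eps) as [M HM].
  apply Filter_prod with (fun x => x = a) (fun b => M < b); [reflexivity | exists M; auto |].
  intros x b -> Hb. exists (RInt f a b). split.
  - apply (RInt_correct (V := R_CompleteNormedModule)), Hex.
  - apply HP, HM, Hb.
Qed.

Lemma fact_double_le (j : nat) : INR (fact (2 * j)) <= 2 ^ (2 * j) * INR (fact j) ^ 2.
Proof.
  induction j as [|j IH]; [simpl; lra|].
  replace (2 * S j)%nat with (S (S (2 * j))) by lia.
  rewrite !fact_simpl, !mult_INR, !S_INR, mult_INR.
  pose proof (pos_INR j). pose proof (INR_fact_lt_0 (2 * j)).
  replace (2 ^ S (S (2 * j)) * ((INR j + 1) * INR (fact j)) ^ 2)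
    with (4 * (INR j + 1) ^ 2 * (2 ^ (2 * j) * INR (fact j) ^ 2)) by (simpl; ring).
  replace (INR 2) with 2 by (simpl; ring). rewrite <- Rmult_assoc.
  apply Rmult_le_compat; nra.
Qed.

Lemma exp_le_exp (x y : R) : x <= y -> exp x <= exp y.
Proof. intros [H | ->]; [left; apply exp_increasing, H | lra]. Qed.

Lemma cosh_pos (x : R) : 0 < cosh x.
Proof. unfold cosh. pose proof (exp_pos x). pose proof (exp_pos (- x)). lra. Qed.

Lemma cosh_ge_id (u : R) : 0 <= u -> u <= cosh u.
Proof.
  intros Hu. unfold cosh. pose proof (exp_pos (- u)).
  assert (E : exp u = exp (u / 2) * exp (u / 2)) by (rewrite <- exp_plus; f_equal; field).
  pose proof (exp_ineq1_le (u / 2)).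
  assert ((1 + u / 2) * (1 + u / 2) <= exp (u / 2) * exp (u / 2)) by (apply Rmult_le_compat; lra).
  pose proof (Rle_0_sqr (1 - u / 2)). unfold Rsqr in *. nra.
Qed.

Lemma cosh_sqr (x : R) : cosh x ^ 2 = 1 + sinh x ^ 2.
Proof.
  unfold cosh, sinh.
  assert (exp x * exp (- x) = 1) by (rewrite <- exp_plus, Rplus_opp_r, exp_0; reflexivity).
  nra.
Qed.

Lemma is_lim_arcsinh : is_lim arcsinh p_infty p_infty.
Proof.
  apply is_lim_spec. intros M. exists (sinh M). intros y Hy.
  rewrite <- (arcsinh_sinh M). apply arcsinh_lt, Hy.
Qed.

Lemma sin_ge_third (x : R) : 0 <= x <= PI / 2 -> x / 3 <= sin x.
Proof.
  intros Hx. pose proof PI2_1. pose proof PI_4.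
  assert (Hsmall : forall a, 0 <= a <= 1 -> 5 * a / 6 <= sin a).
  { intros a Ha. destruct (SIN a) as [H1 _]; [lra | lra |].
    unfold sin_lb, sin_approx, sin_term in H1. simpl in H1.
    assert (0 <= a ^ 2 <= 1) by (split; nra).
    assert (0 <= a ^ 5) by (apply pow_le; lra).
    assert (a ^ 7 <= a ^ 5) by (replace (a ^ 7) with (a ^ 5 * a ^ 2) by ring; nra).
    assert (a ^ 3 <= a) by (replace (a ^ 3) with (a * a ^ 2) by ring; nra).
    simpl in *. nra. }
  destruct (Rle_dec x 1).
  - pose proof (Hsmall x ltac:(lra)). lra.
  - pose proof (Hsmall 1 ltac:(lra)). assert (sin 1 <= sin x) by (apply sin_incr_1; lra). lra.
Qed.

Lemma is_RInt_exp_lin (c U : R) : 0 < c ->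
  is_RInt (fun u => exp (- c * u)) 0 U ((1 - exp (- c * U)) / c).
Proof.
  intros Hc.
  replace ((1 - exp (- c * U)) / c) with (minus (- exp (- c * U) / c) (- exp (- c * 0) / c))
    by (unfold minus, plus, opp; simpl; rewrite Rmult_0_r, exp_0; field; lra).
  apply (@is_RInt_derive R_CompleteNormedModule (fun z => - exp (- c * z) / c)).
  - intros x _. auto_derive; auto. field. lra.
  - intros x _. apply (ex_derive_continuous (fun z => exp (- c * z))). auto_derive. auto.
Qed.

Lemma continuous_cos_lin (t y : R) : continuous (fun x => cos (t * x)) y.
Proof. apply (ex_derive_continuous (fun x => cos (t * x))). auto_derive. auto. Qed.

(** * The power series of J0 *)

Definition J0_coef (i : nat) : R :=
  if Nat.even i then (-1) ^ Nat.div2 i / (2 ^ i * INR (fact (Nat.div2 i)) ^ 2) else 0.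

Lemma J0_coef_even (j : nat) : J0_coef (2 * j) = (-1) ^ j / (2 ^ (2 * j) * INR (fact j) ^ 2).
Proof. unfold J0_coef. rewrite Nat.even_mul, Nat.div2_double. reflexivity. Qed.

Lemma J0_coef_odd (j : nat) : J0_coef (2 * j + 1) = 0.
Proof. unfold J0_coef. rewrite Nat.even_add, Nat.even_mul. reflexivity. Qed.

(* Bessel's equation x J0'' + J0' + x J0 = 0, read on the coefficients. *)
Lemma J0_coef_rec (i : nat) : INR (i + 2) ^ 2 * J0_coef (i + 2) = - J0_coef i.
Proof.
  destruct (Nat.Even_or_Odd i) as [[j ->]|[j ->]].
  - replace (2 * j + 2)%nat with (2 * S j)%nat by lia.
    rewrite !J0_coef_even, (fact_simpl j), (mult_INR (S j)).
    replace (INR (2 * S j)) with (2 * (INR j + 1)) by (rewrite mult_INR, (S_INR j); simpl (INR 2); ring).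
    replace (2 * S j)%nat with (S (S (2 * j))) by lia.
    rewrite (S_INR j), <- !tech_pow_Rmult.
    pose proof (INR_fact_lt_0 j). pose proof (pow_lt 2 (2 * j) ltac:(lra)). pose proof (pos_INR j).
    field. repeat split; lra.
  - replace (2 * j + 1 + 2)%nat with (2 * S j + 1)%nat by lia.
    rewrite !J0_coef_odd. ring.
Qed.

Lemma J0_coef_bound (i : nat) : Rabs (J0_coef i) * INR (fact i) <= 1.
Proof.
  destruct (Nat.Even_or_Odd i) as [[j ->]|[j ->]].
  - rewrite J0_coef_even, Rabs_div, pow_1_abs, Rabs_right.
    + pose proof (fact_double_le j).
      assert (0 < 2 ^ (2 * j) * INR (fact j) ^ 2)
        by (apply Rmult_lt_0_compat; [apply pow_lt; lra | apply pow_lt, INR_fact_lt_0]).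
      unfold Rdiv. rewrite Rmult_1_l, Rmult_comm.
      apply (Rmult_le_reg_r (2 ^ (2 * j) * INR (fact j) ^ 2)); [lra|].
      rewrite Rmult_assoc, Rinv_l; lra.
    + apply Rle_ge, Rmult_le_pos; [apply pow_le; lra | apply pow2_ge_0].
    + apply Rgt_not_eq, Rmult_lt_0_compat; [apply pow_lt; lra | apply pow_lt, INR_fact_lt_0].
  - rewrite J0_coef_odd, Rabs_R0. lra.
Qed.

Lemma is_series_J0 (x : R) :
  is_series (fun k => (-1) ^ k * (x / 2) ^ (2 * k) / INR (fact k) ^ 2) (J0 x).
Proof.
  apply Series_correct, ex_series_Rabs.
  apply (@ex_series_le R_AbsRing R_CompleteNormedModule _
           (fun k => (x ^ 2 / 4) ^ k / INR (fact k))); [|exists (exp (x ^ 2 / 4)); apply is_series_exp].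
  intros k. change (Rabs (Rabs ((-1) ^ k * (x / 2) ^ (2 * k) / INR (fact k) ^ 2))
                    <= (x ^ 2 / 4) ^ k / INR (fact k)).
  replace ((x / 2) ^ (2 * k)) with ((x ^ 2 / 4) ^ k) by (rewrite pow_mult; f_equal; field).
  pose proof (INR_fact_lt_0 k). pose proof (pow2_ge_0 x).
  assert (1 <= INR (fact k)) by (apply (le_INR 1), lt_O_fact).
  assert (0 <= (x ^ 2 / 4) ^ k) by (apply pow_le; lra).
  rewrite Rabs_Rabsolu, Rabs_div, Rabs_mult, pow_1_abs, Rabs_right, Rabs_right;
    [| apply Rle_ge, pow2_ge_0 | lra | apply pow_nonzero; lra].
  unfold Rdiv. rewrite Rmult_1_l. apply Rmult_le_compat_l; [lra|].
  apply Rinv_le_contravar; [lra|]. nra.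
Qed.

Lemma is_series_J0_coef (x : R) : is_series (fun i => J0_coef i * x ^ i) (J0 x).
Proof.
  assert (H : is_pseries J0_coef x (J0 x + x * 0)).
  { apply is_pseries_odd_even; unfold is_pseries.
    - eapply is_series_ext; [|apply is_series_J0].
      intros n. rewrite pow_n_pow.
      change ((-1) ^ n * (x / 2) ^ (2 * n) / INR (fact n) ^ 2 = (x ^ 2) ^ n * J0_coef (2 * n)).
      rewrite J0_coef_even, (pow_mult (x / 2)), (pow_mult 2).
      replace ((x / 2) ^ 2) with (x ^ 2 * / 2 ^ 2) by field.
      rewrite Rpow_mult_distr, pow_inv. pose proof (INR_fact_lt_0 n).
      field. split; [lra | apply pow_nonzero; lra].
    - pose proof (is_series_scal 0 _ _ (is_series_exp 0)) as H0.
      unfold scal in H0; simpl in H0; unfold mult in H0; simpl in H0.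
      rewrite Rmult_0_l in H0. eapply is_series_ext; [|exact H0].
      intros n. rewrite J0_coef_odd, Rmult_0_l. unfold scal; simpl; unfold mult; simpl. ring. }
  rewrite Rmult_0_r, Rplus_0_r in H.
  eapply is_series_ext; [|exact H].
  intros n. rewrite pow_n_pow. apply Rmult_comm.
Qed.

Lemma J0_opp (x : R) : J0 (- x) = J0 x.
Proof.
  unfold J0. apply Series_ext. intros n. rewrite !pow_mult.
  replace ((- x / 2) ^ 2) with ((x / 2) ^ 2) by field. reflexivity.
Qed.

(** * The coefficients of J0(x) exp(-xy) *)

Definition exp_neg_coef (y : R) (m : nat) : R := (-y) ^ m / INR (fact m).

Lemma exp_neg_coef_shift (y : R) (m : nat) :
  y * exp_neg_coef y m = - INR (S m) * exp_neg_coef y (S m).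
Proof.
  unfold exp_neg_coef. rewrite fact_simpl, mult_INR, S_INR.
  pose proof (INR_fact_lt_0 m). pose proof (pos_INR m).
  simpl pow. field. lra.
Qed.

Lemma is_derive_exp_neg_coef (y : R) (m : nat) :
  is_derive (fun x => exp_neg_coef x (S m)) y (- exp_neg_coef y m).
Proof.
  unfold exp_neg_coef. rewrite fact_simpl, mult_INR.
  pose proof (INR_fact_lt_0 m). pose proof (pos_INR m).
  auto_derive; [auto|].
  change (match m with 0%nat => 1 | S _ => INR m + 1 end) with (INR (S m)).
  rewrite S_INR. field. lra.
Qed.

Definition J0_exp_coef (y : R) (n : nat) : R :=
  sum_f_R0 (fun i => J0_coef i * exp_neg_coef y (n - i)) n.

Definition J0_exp_coef_prev (y : R) (n : nat) : R :=
  match n with O => 0 | S m => J0_exp_coef y m end.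

Lemma J0_exp_coef_mul_y (y : R) (n : nat) :
  y * J0_exp_coef y (S n) =
  - sum_f_R0 (fun i => J0_coef i * INR (S (S n) - i) * exp_neg_coef y (S (S n) - i)) (S (S n)).
Proof.
  unfold J0_exp_coef. rewrite scal_sum, (sum_f_R0_last_0 _ (S n)), sum_f_R0_opp.
  - apply sum_eq. intros i Hi.
    replace (S (S n) - i)%nat with (S (S n - i)) by lia.
    rewrite (Rmult_assoc (J0_coef i)), (Rmult_comm _ y), exp_neg_coef_shift. ring.
  - rewrite Nat.sub_diag. simpl. ring.
Qed.

Lemma J0_exp_coef_mul_y2 (y : R) (n : nat) :
  y ^ 2 * J0_exp_coef y n =
  sum_f_R0 (fun i => J0_coef i * (INR (S (S n) - i) * (INR (S (S n) - i) - 1))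
                     * exp_neg_coef y (S (S n) - i)) (S (S n)).
Proof.
  rewrite (sum_f_R0_last_0 _ (S n)), (sum_f_R0_last_0 _ n).
  - unfold J0_exp_coef. rewrite scal_sum. apply sum_eq. intros i Hi.
    replace (S (S n) - i)%nat with (S (S (n - i))) by lia.
    rewrite Rmult_assoc. replace (exp_neg_coef y (n - i) * y ^ 2) with (y * (y * exp_neg_coef y (n - i))) by ring.
    rewrite exp_neg_coef_shift.
    replace (y * (- INR (S (n - i)) * exp_neg_coef y (S (n - i))))
      with (- INR (S (n - i)) * (y * exp_neg_coef y (S (n - i)))) by ring.
    rewrite exp_neg_coef_shift, !S_INR. ring.
  - replace (S (S n) - S n)%nat with 1%nat by lia. simpl. ring.
  - rewrite Nat.sub_diag. simpl. ring.
Qed.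

Lemma J0_exp_coef_rec (y : R) (n : nat) :
  INR (S (S n)) ^ 2 * J0_exp_coef y (S (S n)) + (2 * INR n + 3) * y * J0_exp_coef y (S n)
  + (1 + y ^ 2) * J0_exp_coef y n = 0.
Proof.
  set (N := S (S n)).
  assert (Hsum : INR N ^ 2 * J0_exp_coef y N + (2 * INR n + 3) * y * J0_exp_coef y (S n)
                 + y ^ 2 * J0_exp_coef y n
                 = sum_f_R0 (fun i => INR i ^ 2 * J0_coef i * exp_neg_coef y (N - i)) N).
  { rewrite Rmult_assoc, J0_exp_coef_mul_y, J0_exp_coef_mul_y2.
    unfold J0_exp_coef at 1. rewrite scal_sum, sum_f_R0_opp, scal_sum, <- !plus_sum.
    apply sum_eq. intros i Hi. rewrite minus_INR by exact Hi.
    unfold N. rewrite !S_INR. ring. }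
  (* the recurrence of the J0 coefficients kills the shifted sum *)
  assert (Hshift : sum_f_R0 (fun i => INR i ^ 2 * J0_coef i * exp_neg_coef y (N - i)) N
                   = - J0_exp_coef y n).
  { unfold N. rewrite !decomp_sum by lia. simpl pred.
    rewrite (J0_coef_odd 0 : J0_coef 1 = 0). unfold J0_exp_coef. rewrite sum_f_R0_opp.
    replace (INR 0 ^ 2) with 0 by (simpl; ring).
    rewrite Rmult_0_r, !Rmult_0_l, !Rplus_0_l.
    apply sum_eq. intros i Hi.
    replace (S (S n) - S (S i))%nat with (n - i)%nat by lia.
    pose proof (J0_coef_rec i) as Hr. replace (i + 2)%nat with (S (S i)) in Hr by lia.
    rewrite Hr. ring. }
  unfold N in *. lra.
Qed.

Lemma J0_exp_coef_rec_prev (y : R) (n : nat) :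
  INR (S n) ^ 2 * J0_exp_coef y (S n) + (2 * INR n + 1) * y * J0_exp_coef y n
  + (1 + y ^ 2) * J0_exp_coef_prev y n = 0.
Proof.
  destruct n as [|n]; simpl J0_exp_coef_prev.
  - unfold J0_exp_coef, exp_neg_coef. simpl. rewrite (J0_coef_odd 0 : J0_coef 1 = 0).
    unfold J0_coef. simpl. field.
  - pose proof (J0_exp_coef_rec y n). rewrite !S_INR in *. lra.
Qed.

Lemma is_derive_J0_exp_coef (y : R) (n : nat) :
  is_derive (fun x => J0_exp_coef x n) y (- J0_exp_coef_prev y n).
Proof.
  unfold J0_exp_coef. destruct n as [|n]; simpl J0_exp_coef_prev.
  - simpl. unfold exp_neg_coef. simpl.
    apply (is_derive_ext (fun _ => J0_coef 0 * (1 / 1))); [reflexivity|].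
    auto_derive; [auto | ring].
  - apply (is_derive_ext (fun x => sum_f_R0 (fun i => J0_coef i * exp_neg_coef x (S n - i)) n
                                   + J0_coef (S n) * exp_neg_coef x 0)).
    { intros x. rewrite tech5, Nat.sub_diag. reflexivity. }
    replace (- J0_exp_coef y n)
      with (sum_f_R0 (fun i => J0_coef i * - exp_neg_coef y (n - i)) n + 0).
    2:{ unfold J0_exp_coef. rewrite sum_f_R0_opp, Rplus_0_r.
        apply sum_eq. intros. ring. }
    apply (is_derive_plus (fun x => sum_f_R0 (fun i => J0_coef i * exp_neg_coef x (S n - i)) n)
             (fun x => J0_coef (S n) * exp_neg_coef x 0)).
    + apply (is_derive_sum_f_R0 (fun i x => J0_coef i * exp_neg_coef x (S n - i))).
      intros i Hi. replace (S n - i)%nat with (S (n - i)) by lia.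
      apply (is_derive_scal (fun x => exp_neg_coef x (S (n - i)))), is_derive_exp_neg_coef.
    + unfold exp_neg_coef. simpl.
      apply (is_derive_ext (fun _ => J0_coef (S n) * (1 / 1))); [reflexivity|].
      auto_derive; [auto | ring].
Qed.

Lemma J0_exp_coef_at_0 (n : nat) : J0_exp_coef 0 n = J0_coef n.
Proof.
  unfold J0_exp_coef. destruct n as [|n].
  - unfold exp_neg_coef. simpl. field.
  - rewrite tech5, Nat.sub_diag, (sum_eq _ (fun _ => 0)).
    + unfold exp_neg_coef. rewrite sum_cte. simpl. field.
    + intros i Hi. replace (S n - i)%nat with (S (n - i)) by lia.
      unfold exp_neg_coef. rewrite Ropp_0, pow_ne_zero by lia. unfold Rdiv. ring.
Qed.

Lemma J0_exp_coef_bound (y : R) (n : nat) :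
  INR (fact n) * Rabs (J0_exp_coef y n) <= 2 ^ n * (1 + y ^ 2) ^ n.
Proof.
  assert (Hy : Rabs y <= 1 + y ^ 2).
  { destruct (Rle_dec 0 y); [rewrite Rabs_right | rewrite Rabs_left]; nra. }
  assert (H1 : 1 <= 1 + y ^ 2) by (pose proof (pow2_ge_0 y); lra).
  pose proof (INR_fact_lt_0 n).
  assert (Hbinom : 2 ^ n = sum_f_R0 (fun i => Binomial.C n i) n).
  { replace 2 with (1 + 1) by ring. rewrite binomial. apply sum_eq. intros. rewrite !pow1. ring. }
  rewrite Hbinom, (Rmult_comm (sum_f_R0 _ n)), scal_sum.
  eapply Rle_trans; [apply Rmult_le_compat_l; [lra | apply Rsum_abs]|].
  rewrite scal_sum. apply sum_Rle. intros i Hi.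
  unfold exp_neg_coef, Binomial.C.
  pose proof (J0_coef_bound i). pose proof (INR_fact_lt_0 i). pose proof (INR_fact_lt_0 (n - i)).
  assert (Hp : Rabs y ^ (n - i) <= (1 + y ^ 2) ^ n).
  { apply Rle_trans with ((1 + y ^ 2) ^ (n - i)).
    - apply pow_incr. split; [apply Rabs_pos | exact Hy].
    - apply Rle_pow; [exact H1 | lia]. }
  pose proof (pow_le (Rabs y) (n - i) (Rabs_pos y)).
  rewrite Rabs_mult, Rabs_div, <- RPow_abs, Rabs_Ropp, (Rabs_right (INR (fact (n - i)))) by lra.
  replace (Rabs (J0_coef i) * (Rabs y ^ (n - i) / INR (fact (n - i))) * INR (fact n))
    with (INR (fact n) / (INR (fact i) * INR (fact (n - i)))
          * ((Rabs (J0_coef i) * INR (fact i)) * Rabs y ^ (n - i))) by (field; lra).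
  apply Rmult_le_compat_l.
  - apply Rlt_le, Rdiv_lt_0_compat; [lra | apply Rmult_lt_0_compat; lra].
  - pose proof (Rabs_pos (J0_coef i)). nra.
Qed.

Lemma is_series_J0_exp_coef (x y : R) :
  is_series (fun n => J0_exp_coef y n * x ^ n) (J0 x * exp (- (x * y))).
Proof.
  set (A := fun i => J0_coef i * x ^ i). set (B := fun m => exp_neg_coef y m * x ^ m).
  assert (HB : is_series B (exp (- (x * y)))).
  { eapply is_series_ext; [|apply is_series_exp]. intros n. unfold B, exp_neg_coef.
    replace (- (x * y)) with (- y * x) by ring. rewrite Rpow_mult_distr.
    simpl. unfold Rdiv. ring. }
  assert (HAa : ex_series (fun i => Rabs (A i))).
  { apply (ex_series_abs_exp_bounded _ (Rabs x)). intros n. unfold A.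
    rewrite Rabs_mult, <- RPow_abs.
    pose proof (J0_coef_bound n). pose proof (pow_le (Rabs x) n (Rabs_pos x)).
    pose proof (Rabs_pos (J0_coef n)). pose proof (INR_fact_lt_0 n). nra. }
  assert (HBa : ex_series (fun i => Rabs (B i))).
  { apply (ex_series_abs_exp_bounded _ (Rabs (x * y))). intros n. unfold B, exp_neg_coef.
    pose proof (INR_fact_lt_0 n).
    rewrite Rabs_mult, Rabs_div, <- !RPow_abs, Rabs_Ropp, (Rabs_right (INR (fact n))),
      Rabs_mult, Rpow_mult_distr by lra.
    right. field. lra. }
  eapply is_series_ext; [|exact (is_series_mult A B _ _ (is_series_J0_coef x) HB HAa HBa)].
  intros n. simpl. unfold J0_exp_coef. rewrite (Rmult_comm _ (x ^ n)), scal_sum.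
  apply sum_eq. intros i Hi. unfold A, B.
  replace (x ^ n) with (x ^ i * x ^ (n - i)) by (rewrite <- pow_add; f_equal; lia).
  ring.
Qed.

Lemma is_series_J0_cosh (x y : R) :
  is_series (fun k => J0_exp_coef y (2 * k) * x ^ (2 * k)) (J0 x * cosh (x * y)).
Proof.
  pose proof (is_series_scal (/ 2) _ _ (is_series_plus _ _ _ _
    (is_series_J0_exp_coef x y) (is_series_J0_exp_coef (- x) y))) as H.
  rewrite J0_opp in H.
  apply is_series_even_part in H.
  - eapply is_series_ext; [|replace (J0 x * cosh (x * y))
        with (/ 2 * (J0 x * exp (- (x * y)) + J0 x * exp (- (- x * y))))
        by (unfold cosh; replace (- (- x * y)) with (x * y) by ring; field); exact H].
    intros k. change (/ 2 * (J0_exp_coef y (2 * k) * x ^ (2 * k)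
                             + J0_exp_coef y (2 * k) * (- x) ^ (2 * k))
                      = J0_exp_coef y (2 * k) * x ^ (2 * k)).
    replace (- x) with (-1 * x) by ring. rewrite Rpow_mult_distr, pow_1_even. field.
  - intros k. change (/ 2 * (J0_exp_coef y (2 * k + 1) * x ^ (2 * k + 1)
                             + J0_exp_coef y (2 * k + 1) * (- x) ^ (2 * k + 1)) = 0).
    replace (- x) with (-1 * x) by ring. replace (2 * k + 1)%nat with (S (2 * k)) by lia.
    rewrite Rpow_mult_distr, pow_1_odd. ring.
Qed.

(** * The derivatives of G(y) = (1 + y^2)^(-1/2) *)

Definition G (y : R) : R := / sqrt (1 + y ^ 2).

Definition G_deriv (n : nat) (y : R) : R :=
  INR (fact n) ^ 2 * J0_exp_coef y n / (sqrt (1 + y ^ 2) * (1 + y ^ 2) ^ n).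

Lemma one_plus_sqr_pos (y : R) : 0 < 1 + y ^ 2.
Proof. pose proof (pow2_ge_0 y). lra. Qed.

Lemma G_pos (y : R) : 0 < G y.
Proof. apply Rinv_0_lt_compat, sqrt_lt_R0, one_plus_sqr_pos. Qed.

Lemma G_le_1 (y : R) : G y <= 1.
Proof.
  assert (H : 1 <= sqrt (1 + y ^ 2)).
  { rewrite <- sqrt_1 at 1. apply sqrt_le_1_alt. pose proof (pow2_ge_0 y). lra. }
  unfold G. rewrite <- Rinv_1 at 2. apply Rinv_le_contravar; lra.
Qed.

Lemma G_le_inv (y : R) : 0 < y -> G y <= / y.
Proof.
  intros Hy. unfold G. apply Rinv_le_contravar; [exact Hy|].
  rewrite <- (sqrt_pow2 y) at 1 by lra. apply sqrt_le_1_alt. lra.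
Qed.

Lemma G_deriv_0 (y : R) : G_deriv 0 y = G y.
Proof.
  unfold G_deriv, G, J0_exp_coef, exp_neg_coef, J0_coef. simpl. field.
  apply Rgt_not_eq, sqrt_lt_R0, one_plus_sqr_pos.
Qed.

Lemma is_derive_inv_sqrt_pow (n : nat) (y : R) :
  is_derive (fun x => / (sqrt (1 + x ^ 2) * (1 + x ^ 2) ^ n)) y
    (- (2 * INR n + 1) * y / (sqrt (1 + y ^ 2) * (1 + y ^ 2) ^ S n)).
Proof.
  pose proof (one_plus_sqr_pos y) as Hu.
  pose proof (sqrt_lt_R0 _ Hu) as Hs. pose proof (sqrt_sqrt _ (Rlt_le _ _ Hu)) as Hss.
  pose proof (pow_lt _ n Hu) as Hp.
  apply (is_derive_ext (fun x => / sqrt (1 + x ^ 2) * / (1 + x ^ 2) ^ n)).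
  { intros x. rewrite Rinv_mult. reflexivity. }
  auto_derive; replace (y * (y * 1)) with (y ^ 2) by ring;
    set (u := 1 + y ^ 2) in *; set (s := sqrt u) in *.
  - repeat split; [lra | lra | apply pow_nonzero; lra].
  - destruct n as [|m]; simpl pred.
    + simpl. rewrite <- Hss. field. lra.
    + rewrite S_INR, <- !tech_pow_Rmult, <- Hss. field.
      split; [apply pow_nonzero | ]; nra.
Qed.

Lemma is_derive_G_deriv (n : nat) (y : R) : is_derive (G_deriv n) y (G_deriv (S n) y).
Proof.
  pose proof (one_plus_sqr_pos y) as Hu. pose proof (sqrt_lt_R0 _ Hu) as Hs.
  pose proof (pow_lt _ n Hu) as Hp.
  apply (is_derive_ext (fun x => INR (fact n) ^ 2 *
                          (J0_exp_coef x n * / (sqrt (1 + x ^ 2) * (1 + x ^ 2) ^ n)))).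
  { intros x. unfold G_deriv, Rdiv. simpl. ring. }
  assert (E : G_deriv (S n) y = INR (fact n) ^ 2 *
    (- J0_exp_coef_prev y n * / (sqrt (1 + y ^ 2) * (1 + y ^ 2) ^ n)
     + J0_exp_coef y n * (- (2 * INR n + 1) * y / (sqrt (1 + y ^ 2) * (1 + y ^ 2) ^ S n)))).
  { pose proof (J0_exp_coef_rec_prev y n) as Hrec.
    unfold G_deriv. rewrite fact_simpl, mult_INR, <- (tech_pow_Rmult (1 + y ^ 2) n).
    replace ((INR (S n) * INR (fact n)) ^ 2 * J0_exp_coef y (S n))
      with (- INR (fact n) ^ 2 * ((2 * INR n + 1) * y * J0_exp_coef y n
                                  + (1 + y ^ 2) * J0_exp_coef_prev y n)) by nra.
    field. lra. }
  rewrite E.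
  apply (is_derive_scal (fun x => J0_exp_coef x n * / (sqrt (1 + x ^ 2) * (1 + x ^ 2) ^ n))).
  apply (is_derive_mult (fun x => J0_exp_coef x n)
                        (fun x => / (sqrt (1 + x ^ 2) * (1 + x ^ 2) ^ n))).
  - apply is_derive_J0_exp_coef.
  - apply is_derive_inv_sqrt_pow.
  - intros; apply Rmult_comm.
Qed.

Lemma continuous_G_deriv (n : nat) (y : R) : continuous (G_deriv n) y.
Proof. apply (ex_derive_continuous (G_deriv n)). eexists. apply is_derive_G_deriv. Qed.

Lemma G_deriv_odd_0 (k : nat) : G_deriv (2 * k + 1) 0 = 0.
Proof. unfold G_deriv. rewrite J0_exp_coef_at_0, J0_coef_odd. unfold Rdiv. ring. Qed.

Lemma G_deriv_bound (n : nat) (y : R) : Rabs (G_deriv n y) <= INR (fact n) * 2 ^ n * G y.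
Proof.
  pose proof (one_plus_sqr_pos y) as Hu. pose proof (sqrt_lt_R0 _ Hu) as Hs.
  pose proof (pow_lt _ n Hu) as Hp.
  pose proof (J0_exp_coef_bound y n). pose proof (INR_fact_lt_0 n).
  unfold G_deriv, G.
  rewrite Rabs_div, Rabs_mult, (Rabs_right (sqrt _ * _)), (Rabs_right (_ ^ 2));
    [| apply Rle_ge, pow2_ge_0 | apply Rle_ge, Rlt_le, Rmult_lt_0_compat; lra
     | apply Rgt_not_eq, Rmult_lt_0_compat; lra].
  apply (Rmult_le_reg_r (sqrt (1 + y ^ 2) * (1 + y ^ 2) ^ n)); [nra|].
  replace (INR (fact n) ^ 2 * Rabs (J0_exp_coef y n) / (sqrt (1 + y ^ 2) * (1 + y ^ 2) ^ n)
           * (sqrt (1 + y ^ 2) * (1 + y ^ 2) ^ n))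
    with (INR (fact n) * (INR (fact n) * Rabs (J0_exp_coef y n))) by (field; lra).
  replace (INR (fact n) * 2 ^ n * / sqrt (1 + y ^ 2) * (sqrt (1 + y ^ 2) * (1 + y ^ 2) ^ n))
    with (INR (fact n) * (2 ^ n * (1 + y ^ 2) ^ n)) by (field; lra).
  apply Rmult_le_compat_l; lra.
Qed.

(** * Expansion of the integrand *)

Definition ber_coef (z : R) (k : nat) : R := z ^ (2 * k) / INR (fact (2 * k)) ^ 2.

Lemma ber_coef_nonneg (z : R) (k : nat) : 0 <= ber_coef z k.
Proof.
  apply Rdiv_le_0_compat; [|apply pow_lt, INR_fact_lt_0].
  rewrite pow_mult. apply pow_le, pow2_ge_0.
Qed.

Lemma is_series_ber (a t : R) :
  0 <= t -> is_series (fun k => ber_coef (a ^ 2 / 4) k * (- t ^ 2) ^ k) (ber (a * sqrt t)).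
Proof.
  intros Ht.
  assert (Eq : forall k, (-1) ^ k * (a * sqrt t / 2) ^ (4 * k) / INR (fact (2 * k)) ^ 2
                         = ber_coef (a ^ 2 / 4) k * (- t ^ 2) ^ k).
  { intros k. unfold ber_coef.
    replace (4 * k)%nat with (2 * (2 * k))%nat by lia. rewrite !pow_mult.
    replace ((a * sqrt t / 2) ^ 2) with (a ^ 2 * sqrt t ^ 2 / 4) by field.
    rewrite pow2_sqrt by exact Ht.
    replace (- t ^ 2) with (-1 * t ^ 2) by ring.
    replace ((a ^ 2 * t / 4) ^ 2) with ((a ^ 2 / 4) ^ 2 * t ^ 2) by field.
    rewrite !Rpow_mult_distr. pose proof (INR_fact_lt_0 (2 * k)). field. lra. }
  unfold ber. eapply is_series_ext; [exact Eq|].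
  apply Series_correct, ex_series_Rabs.
  apply (@ex_series_le R_AbsRing R_CompleteNormedModule _
           (fun k => (a ^ 2 / 4 * t) ^ (2 * k) / INR (fact (2 * k))));
    [|exists (cosh (a ^ 2 / 4 * t)); apply is_series_cosh].
  intros k. change (Rabs (Rabs ((-1) ^ k * (a * sqrt t / 2) ^ (4 * k) / INR (fact (2 * k)) ^ 2))
                    <= (a ^ 2 / 4 * t) ^ (2 * k) / INR (fact (2 * k))).
  rewrite Rabs_Rabsolu, Eq, Rabs_mult, (Rabs_right (ber_coef _ _))
    by apply Rle_ge, ber_coef_nonneg.
  rewrite <- RPow_abs, Rabs_Ropp, Rabs_right, <- pow_mult by apply Rle_ge, pow2_ge_0.
  pose proof (INR_fact_lt_0 (2 * k)).
  assert (1 <= INR (fact (2 * k))) by (apply (le_INR 1), lt_O_fact).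
  assert (0 <= (a ^ 2 / 4 * t) ^ (2 * k) / INR (fact (2 * k)))
    by (apply Rdiv_le_0_compat; [rewrite pow_mult; apply pow_le, pow2_ge_0 | lra]).
  unfold ber_coef.
  replace ((a ^ 2 / 4) ^ (2 * k) / INR (fact (2 * k)) ^ 2 * t ^ (2 * k))
    with ((a ^ 2 / 4 * t) ^ (2 * k) / INR (fact (2 * k)) * / INR (fact (2 * k)))
    by (rewrite Rpow_mult_distr; field; lra).
  rewrite <- (Rmult_1_r ((a ^ 2 / 4 * t) ^ (2 * k) / INR (fact (2 * k)))) at 2.
  apply Rmult_le_compat_l; [lra|].
  rewrite <- Rinv_1. apply Rinv_le_contravar; lra.
Qed.

Definition amplitude (a y : R) : R :=
  G y * J0 (/ 4 * (a ^ 2 / (1 + y ^ 2))) * cosh (/ 4 * (a ^ 2 * y / (1 + y ^ 2))).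

Lemma rhs_integrand_amplitude (a t y : R) : rhs_integrand a t y = amplitude a y * cos (t * y).
Proof. reflexivity. Qed.

Lemma is_series_amplitude (a y : R) :
  is_series (fun k => ber_coef (a ^ 2 / 4) k * G_deriv (2 * k) y) (amplitude a y).
Proof.
  pose proof (one_plus_sqr_pos y) as Hu. pose proof (sqrt_lt_R0 _ Hu) as Hs.
  set (w := a ^ 2 / 4 / (1 + y ^ 2)).
  unfold amplitude.
  replace (/ 4 * (a ^ 2 / (1 + y ^ 2))) with w by (unfold w; field; lra).
  replace (/ 4 * (a ^ 2 * y / (1 + y ^ 2))) with (w * y) by (unfold w; field; lra).
  rewrite Rmult_assoc.
  pose proof (is_series_scal (G y) _ _ (is_series_J0_cosh w y)) as H.
  eapply is_series_ext; [|exact H].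
  intros k. change (G y * (J0_exp_coef y (2 * k) * w ^ (2 * k))
                    = ber_coef (a ^ 2 / 4) k * G_deriv (2 * k) y).
  unfold ber_coef, G_deriv, G, w. unfold Rdiv. rewrite Rpow_mult_distr, pow_inv.
  pose proof (INR_fact_lt_0 (2 * k)). pose proof (pow_lt _ (2 * k) Hu).
  field. repeat split; lra.
Qed.

(** * Integration by parts *)

Definition cos_int (t : R) (n : nat) (Y : R) : R :=
  RInt (fun y => G_deriv n y * cos (t * y)) 0 Y.

Lemma continuous_G_deriv_cos (n : nat) (t y : R) :
  continuous (fun x => G_deriv n x * cos (t * x)) y.
Proof.
  apply (continuous_mult (G_deriv n) (fun x => cos (t * x))).
  - apply continuous_G_deriv.
  - apply continuous_cos_lin.
Qed.

Lemma ex_RInt_G_deriv_cos (n : nat) (t a b : R) :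
  ex_RInt (fun x => G_deriv n x * cos (t * x)) a b.
Proof. apply (@ex_RInt_continuous R_CompleteNormedModule). intros; apply continuous_G_deriv_cos. Qed.

Definition ibp_boundary (t : R) (n : nat) (Y : R) : R :=
  G_deriv (S n) Y * cos (t * Y) + t * G_deriv n Y * sin (t * Y).

Lemma is_derive_ibp_boundary (t : R) (n : nat) (y : R) :
  is_derive (ibp_boundary t n) y
    (G_deriv (S (S n)) y * cos (t * y) + t ^ 2 * (G_deriv n y * cos (t * y))).
Proof.
  unfold ibp_boundary. auto_derive.
  - repeat split; eexists; apply is_derive_G_deriv.
  - rewrite !(is_derive_unique _ _ _ (is_derive_G_deriv _ _)). simpl. ring.
Qed.

Lemma ibp_boundary_at_0 (t : R) (k : nat) : ibp_boundary t (2 * k) 0 = 0.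
Proof.
  unfold ibp_boundary. replace (S (2 * k)) with (2 * k + 1)%nat by lia.
  rewrite G_deriv_odd_0, Rmult_0_r, sin_0. ring.
Qed.

(* Two integrations by parts; the boundary term at 0 vanishes since G is even. *)
Lemma cos_int_rec (t : R) (k : nat) (Y : R) :
  cos_int t (2 * S k) Y = - t ^ 2 * cos_int t (2 * k) Y + ibp_boundary t (2 * k) Y.
Proof.
  assert (Hftc : is_RInt (fun x => G_deriv (S (S (2 * k))) x * cos (t * x)
                                  + t ^ 2 * (G_deriv (2 * k) x * cos (t * x)))
                   0 Y (ibp_boundary t (2 * k) Y - ibp_boundary t (2 * k) 0)).
  { apply (@is_RInt_derive R_CompleteNormedModule (ibp_boundary t (2 * k))).
    - intros; apply is_derive_ibp_boundary.
    - intros x _. apply (continuous_plus (fun x => G_deriv (S (S (2 * k))) x * cos (t * x))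
        (fun x => t ^ 2 * (G_deriv (2 * k) x * cos (t * x)))).
      + apply continuous_G_deriv_cos.
      + apply (continuous_scal_r (t ^ 2) (fun x => G_deriv (2 * k) x * cos (t * x))).
        apply continuous_G_deriv_cos. }
  rewrite ibp_boundary_at_0, Rminus_0_r in Hftc.
  assert (Hsum : is_RInt (fun x => G_deriv (S (S (2 * k))) x * cos (t * x)
                                  + t ^ 2 * (G_deriv (2 * k) x * cos (t * x)))
                   0 Y (cos_int t (S (S (2 * k))) Y + t ^ 2 * cos_int t (2 * k) Y)).
  { unfold cos_int.
    apply (is_RInt_plus (fun x => G_deriv (S (S (2 * k))) x * cos (t * x))
                        (fun x => t ^ 2 * (G_deriv (2 * k) x * cos (t * x)))).
    - apply (RInt_correct (V := R_CompleteNormedModule)), ex_RInt_G_deriv_cos.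
    - apply (is_RInt_scal (fun x => G_deriv (2 * k) x * cos (t * x))).
      apply (RInt_correct (V := R_CompleteNormedModule)), ex_RInt_G_deriv_cos. }
  replace (2 * S k)%nat with (S (S (2 * k))) by lia.
  pose proof (is_RInt_unique _ _ _ _ Hftc) as E1. rewrite (is_RInt_unique _ _ _ _ Hsum) in E1.
  lra.
Qed.

Lemma ibp_boundary_bound (t : R) (n : nat) (Y : R) : 0 <= t ->
  Rabs (ibp_boundary t n Y)
  <= (INR (fact (S n)) * 2 ^ S n + t * (INR (fact n) * 2 ^ n)) * G Y.
Proof.
  intros Ht. unfold ibp_boundary.
  pose proof (G_deriv_bound (S n) Y). pose proof (G_deriv_bound n Y).
  pose proof (Rabs_pos (G_deriv (S n) Y)). pose proof (Rabs_pos (G_deriv n Y)).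
  pose proof (COS_bound (t * Y)). pose proof (SIN_bound (t * Y)).
  assert (Hc : Rabs (cos (t * Y)) <= 1) by (apply Rabs_le; lra).
  assert (Hs : Rabs (sin (t * Y)) <= 1) by (apply Rabs_le; lra).
  pose proof (Rabs_pos (cos (t * Y))). pose proof (Rabs_pos (sin (t * Y))).
  eapply Rle_trans; [apply Rabs_triang|].
  rewrite !Rabs_mult, (Rabs_right t) by lra.
  assert (Rabs (G_deriv (S n) Y) * Rabs (cos (t * Y)) <= Rabs (G_deriv (S n) Y)) by nra.
  assert (t * Rabs (G_deriv n Y) * Rabs (sin (t * Y)) <= t * Rabs (G_deriv n Y)).
  { assert (0 <= t * Rabs (G_deriv n Y)) by (apply Rmult_le_pos; lra). nra. }
  nra.
Qed.

Lemma cos_int_step_ineq (m t r : R) : 0 <= m -> 0 <= t -> 1 <= r ->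
  t ^ 2 * r + 2 * (2 * m + 1) + t <= (2 * m + 2) * (2 * m + 1) * 4 * (1 + t) ^ 2 * r.
Proof.
  intros Hm Ht Hr.
  set (c := (2 * m + 2) * (2 * m + 1)).
  assert (Hc1 : 2 * (2 * m + 1) <= c) by (unfold c; nra).
  assert (Hc2 : 1 <= c) by (unfold c; nra).
  assert (0 <= t ^ 2 * r) by (apply Rmult_le_pos; [apply pow2_ge_0 | lra]).
  replace (c * 4 * (1 + t) ^ 2 * r) with (c * 4 * r + c * 8 * t * r + c * 4 * (t ^ 2 * r)) by ring.
  assert (1 <= c * r) by nra.
  nra.
Qed.

Lemma cos_int_approx (t : R) (k : nat) (Y : R) : 0 < t ->
  Rabs (cos_int t (2 * k) Y - (- t ^ 2) ^ k * cos_int t 0 Y)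
  <= INR (fact (2 * k)) * (2 * (1 + t)) ^ (2 * k) * G Y.
Proof.
  intros Ht. pose proof (G_pos Y) as HG.
  induction k as [|k IH].
  - simpl. rewrite Rmult_1_l, Rminus_eq_0, Rabs_R0. lra.
  - rewrite cos_int_rec.
    replace (- t ^ 2 * cos_int t (2 * k) Y + ibp_boundary t (2 * k) Y
             - (- t ^ 2) ^ S k * cos_int t 0 Y)
      with (- t ^ 2 * (cos_int t (2 * k) Y - (- t ^ 2) ^ k * cos_int t 0 Y)
            + ibp_boundary t (2 * k) Y) by (simpl; ring).
    eapply Rle_trans; [apply Rabs_triang|].
    rewrite Rabs_mult, Rabs_Ropp, (Rabs_right (t ^ 2)) by (apply Rle_ge, pow2_ge_0).
    pose proof (ibp_boundary_bound t (2 * k) Y (Rlt_le _ _ Ht)) as HB.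
    apply (Rmult_le_compat_l (t ^ 2)) in IH; [|apply pow2_ge_0].
    eapply Rle_trans; [apply Rplus_le_compat; [exact IH | exact HB]|].
    set (F := INR (fact (2 * k))). set (q := 2 ^ (2 * k)). set (r := (1 + t) ^ (2 * k)).
    assert (HF : 0 < F) by apply INR_fact_lt_0.
    assert (Hq : 0 < q) by (apply pow_lt; lra).
    assert (Hr : 1 <= r) by (apply pow_R1_Rle; lra).
    replace (2 * S k)%nat with (S (S (2 * k))) by lia.
    rewrite !fact_simpl, !mult_INR, !S_INR, mult_INR. fold F.
    replace ((2 * (1 + t)) ^ S (S (2 * k))) with (4 * (1 + t) ^ 2 * (q * r))
      by (unfold q, r; rewrite <- Rpow_mult_distr; simpl; ring).
    replace ((2 * (1 + t)) ^ (2 * k)) with (q * r) by (unfold q, r; symmetry; apply Rpow_mult_distr).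
    replace (2 ^ S (2 * k)) with (2 * q) by (unfold q; simpl; ring).
    pose proof (cos_int_step_ineq (INR k) t r (pos_INR k) (Rlt_le _ _ Ht) Hr) as Hstep.
    replace (INR 2) with 2 by (simpl; ring).
    apply (Rmult_le_compat_l (F * q * G Y)) in Hstep; [nra|].
    apply Rlt_le, Rmult_lt_0_compat; [apply Rmult_lt_0_compat|]; lra.
Qed.

Definition amplitude_partial (a : R) (K : nat) (y : R) : R :=
  sum_f_R0 (fun k => ber_coef (a ^ 2 / 4) k * G_deriv (2 * k) y) K.

Lemma is_RInt_amplitude_partial_cos (a t Y : R) (K : nat) :
  is_RInt (fun y => amplitude_partial a K y * cos (t * y)) 0 Y
    (sum_f_R0 (fun k => ber_coef (a ^ 2 / 4) k * cos_int t (2 * k) Y) K).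
Proof.
  induction K as [|K IH].
  - apply (is_RInt_ext (fun y => ber_coef (a ^ 2 / 4) 0 * (G_deriv 0 y * cos (t * y)))).
    { intros y _. unfold amplitude_partial. simpl. ring. }
    apply (is_RInt_scal (fun y => G_deriv 0 y * cos (t * y))).
    apply (RInt_correct (V := R_CompleteNormedModule)), ex_RInt_G_deriv_cos.
  - apply (is_RInt_ext (fun y => amplitude_partial a K y * cos (t * y)
             + ber_coef (a ^ 2 / 4) (S K) * (G_deriv (2 * S K) y * cos (t * y)))).
    { intros y _. unfold amplitude_partial. rewrite tech5. simpl. ring. }
    apply (is_RInt_plus (fun y => amplitude_partial a K y * cos (t * y))); [exact IH|].
    apply (is_RInt_scal (fun y => G_deriv (2 * S K) y * cos (t * y))).
    apply (RInt_correct (V := R_CompleteNormedModule)), ex_RInt_G_deriv_cos.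
Qed.

Lemma amplitude_partial_error (a y : R) (K : nat) :
  Rabs (amplitude a y - amplitude_partial a K y)
  <= cosh (a ^ 2 / 2) - sum_f_R0 (fun k => (a ^ 2 / 2) ^ (2 * k) / INR (fact (2 * k))) K.
Proof.
  apply is_series_tail_le; [apply is_series_amplitude | apply is_series_cosh |].
  intros k. pose proof (G_deriv_bound (2 * k) y). pose proof (G_le_1 y). pose proof (G_pos y).
  pose proof (INR_fact_lt_0 (2 * k)). pose proof (ber_coef_nonneg (a ^ 2 / 4) k).
  rewrite Rabs_mult, (Rabs_right (ber_coef _ _)) by lra.
  apply Rle_trans with (ber_coef (a ^ 2 / 4) k * (INR (fact (2 * k)) * 2 ^ (2 * k))).
  - apply Rmult_le_compat_l; [lra|].
    assert (0 <= INR (fact (2 * k)) * 2 ^ (2 * k)) by (pose proof (pow_lt 2 (2 * k)); nra).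
    nra.
  - unfold ber_coef. replace (a ^ 2 / 2) with (a ^ 2 / 4 * 2) by field.
    rewrite Rpow_mult_distr. right. field. lra.
Qed.

Lemma amplitude_partial_cos_unif (a t : R) :
  filterlim (fun K y => amplitude_partial a K y * cos (t * y)) eventually
    (locally (rhs_integrand a t)).
Proof.
  set (tail := fun K => cosh (a ^ 2 / 2)
                        - sum_f_R0 (fun k => (a ^ 2 / 2) ^ (2 * k) / INR (fact (2 * k))) K).
  assert (Htail : is_lim_seq tail 0).
  { rewrite <- (Rminus_eq_0 (cosh (a ^ 2 / 2))).
    apply is_lim_seq_minus'; [apply is_lim_seq_const |].
    apply is_lim_seq_sum_f_R0, is_series_cosh. }
  intros P [eps HP].
  destruct (proj2 (is_lim_seq_spec _ _) Htail eps) as [N HN].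
  exists N. intros K HK. apply HP. intros y.
  change (Rabs (amplitude_partial a K y * cos (t * y) - rhs_integrand a t y) < eps).
  rewrite rhs_integrand_amplitude.
  replace (amplitude_partial a K y * cos (t * y) - amplitude a y * cos (t * y))
    with (- ((amplitude a y - amplitude_partial a K y) * cos (t * y))) by ring.
  rewrite Rabs_Ropp, Rabs_mult.
  pose proof (amplitude_partial_error a y K). pose proof (HN K HK) as HK'.
  rewrite Rminus_0_r in HK'. pose proof (Rle_abs (tail K)).
  assert (Rabs (cos (t * y)) <= 1) by (apply Rabs_le, COS_bound).
  pose proof (Rabs_pos (amplitude a y - amplitude_partial a K y)).
  pose proof (Rabs_pos (cos (t * y))).
  unfold tail in *. nra.
Qed.

Lemma partial_cos_int_sum_approx (a t Y : R) (K : nat) : 0 < t ->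
  Rabs (sum_f_R0 (fun k => ber_coef (a ^ 2 / 4) k * cos_int t (2 * k) Y) K
        - cos_int t 0 Y * sum_f_R0 (fun k => ber_coef (a ^ 2 / 4) k * (- t ^ 2) ^ k) K)
  <= cosh (a ^ 2 / 4 * (2 * (1 + t))) * G Y.
Proof.
  intros Ht. pose proof (G_pos Y).
  rewrite scal_sum, <- minus_sum.
  eapply Rle_trans; [apply Rsum_abs|].
  apply Rle_trans with
    (sum_f_R0 (fun k => (a ^ 2 / 4 * (2 * (1 + t))) ^ (2 * k) / INR (fact (2 * k))) K * G Y).
  - rewrite (Rmult_comm _ (G Y)), scal_sum. apply sum_Rle. intros k _.
    replace (ber_coef (a ^ 2 / 4) k * cos_int t (2 * k) Y
             - ber_coef (a ^ 2 / 4) k * (- t ^ 2) ^ k * cos_int t 0 Y)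
      with (ber_coef (a ^ 2 / 4) k * (cos_int t (2 * k) Y - (- t ^ 2) ^ k * cos_int t 0 Y))
      by ring.
    pose proof (ber_coef_nonneg (a ^ 2 / 4) k). pose proof (INR_fact_lt_0 (2 * k)).
    rewrite Rabs_mult, Rabs_right by lra.
    eapply Rle_trans; [apply Rmult_le_compat_l; [lra | apply cos_int_approx, Ht]|].
    unfold ber_coef. rewrite (Rpow_mult_distr (a ^ 2 / 4)). right. field. lra.
  - apply Rmult_le_compat_r; [lra|]. apply sum_f_R0_cosh_le.
    apply Rmult_le_pos; [pose proof (pow2_ge_0 a) | ]; lra.
Qed.

Lemma RInt_rhs_integrand_approx (a t Y : R) : 0 < t ->
  ex_RInt (rhs_integrand a t) 0 Y /\
  Rabs (RInt (rhs_integrand a t) 0 Y - ber (a * sqrt t) * cos_int t 0 Y)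
  <= cosh (a ^ 2 / 4 * (2 * (1 + t))) * G Y.
Proof.
  intros Ht.
  destruct (filterlim_RInt (fun K y => amplitude_partial a K y * cos (t * y)) 0 Y
              eventually eventually_filter (rhs_integrand a t)
              (fun K => sum_f_R0 (fun k => ber_coef (a ^ 2 / 4) k * cos_int t (2 * k) Y) K)
              (is_RInt_amplitude_partial_cos a t Y) (amplitude_partial_cos_unif a t))
    as [I [HI HRInt]].
  split; [exists I; exact HRInt|].
  rewrite (is_RInt_unique _ _ _ _ HRInt).
  assert (Hber : is_lim_seq
                   (fun K => cos_int t 0 Y * sum_f_R0 (fun k => ber_coef (a ^ 2 / 4) k * (- t ^ 2) ^ k) K)
                   (cos_int t 0 Y * ber (a * sqrt t))).
  { apply (is_lim_seq_scal_l _ _ (ber (a * sqrt t))), is_lim_seq_sum_f_R0, is_series_ber. lra. }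
  assert (Hle : Rbar_le (Rbar_abs (I - cos_int t 0 Y * ber (a * sqrt t)))
                        (cosh (a ^ 2 / 4 * (2 * (1 + t))) * G Y)).
  { eapply is_lim_seq_le; [| apply is_lim_seq_abs, is_lim_seq_minus'; [exact HI | exact Hber]
                           | apply is_lim_seq_const].
    intros K. apply partial_cos_int_sum_approx, Ht. }
  simpl in Hle. rewrite Rmult_comm. exact Hle.
Qed.

(** * The Macdonald function *)

Lemma ex_RInt_exp_cosh (t a b : R) : ex_RInt (fun u => exp (- t * cosh u)) a b.
Proof.
  apply (@ex_RInt_continuous R_CompleteNormedModule). intros z _.
  apply (ex_derive_continuous (fun u => exp (- t * cosh u))). auto_derive. auto.
Qed.

Section Macdonald.

Variable t : R.

Hypothesis ht : 0 < t.

Definition K0_partial (U : R) : R := RInt (fun u => exp (- t * cosh u)) 0 U.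

Lemma K0_partial_nondecreasing (U V : R) : U <= V -> K0_partial U <= K0_partial V.
Proof.
  intros H. unfold K0_partial. rewrite <- (RInt_Chasles _ 0 U V) by apply ex_RInt_exp_cosh.
  assert (0 <= RInt (fun u => exp (- t * cosh u)) U V).
  { apply RInt_ge_0; [exact H | apply ex_RInt_exp_cosh | intros; left; apply exp_pos]. }
  change (plus ?x ?y) with (x + y). lra.
Qed.

Lemma K0_partial_le (U : R) : K0_partial U <= / t.
Proof.
  destruct (Rle_lt_dec 0 U) as [HU | HU].
  - unfold K0_partial.
    eapply Rle_trans.
    + apply (RInt_le _ (fun u => exp (- t * u))); [exact HU | apply ex_RInt_exp_cosh
            | eexists; apply is_RInt_exp_lin, ht |].
      intros u Hu. apply exp_le_exp. pose proof (cosh_ge_id u ltac:(lra)). nra.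
    + rewrite (is_RInt_unique _ _ _ _ (is_RInt_exp_lin t U ht)).
      pose proof (exp_pos (- t * U)). unfold Rdiv. rewrite Rmult_minus_distr_r, Rmult_1_l.
      pose proof (Rinv_0_lt_compat t ht). nra.
  - apply Rle_trans with (K0_partial 0); [apply K0_partial_nondecreasing; lra|].
    unfold K0_partial. rewrite RInt_point. left. apply Rinv_0_lt_compat, ht.
Qed.

Lemma is_lim_K0_partial : is_lim K0_partial p_infty (K0 t).
Proof.
  destruct (is_lim_p_infty_of_nondecreasing K0_partial (/ t) K0_partial_nondecreasing K0_partial_le)
    as [L HL].
  replace (K0 t) with L; [exact HL|].
  symmetry. apply is_RInt_gen_unique, is_RInt_gen_p_infty_of_is_lim; [apply ex_RInt_exp_cosh | exact HL].
Qed.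

End Macdonald.

Section Contour.

Variables t U : R.

Hypothesis ht : 0 < t.

(* Real and imaginary parts of exp (i t sinh (u + i th)). *)

Definition contour_re (th u : R) : R := exp (- t * cosh u * sin th) * cos (t * sinh u * cos th).

Definition contour_im (th u : R) : R := exp (- t * cosh u * sin th) * sin (t * sinh u * cos th).

Definition contour_re_dth (th u : R) : R :=
  exp (- t * cosh u * sin th) *
  (- t * cosh u * cos th * cos (t * sinh u * cos th)
   + t * sinh u * sin th * sin (t * sinh u * cos th)).

Lemma is_derive_contour_re_th (th u : R) : is_derive (fun z => contour_re z u) th (contour_re_dth th u).
Proof. unfold contour_re, contour_re_dth. auto_derive; auto. ring. Qed.

(* Cauchy-Riemann *)

Lemma is_derive_contour_im_u (th u : R) : is_derive (fun z => - contour_im th z) u (contour_re_dth th u).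
Proof. unfold contour_im, contour_re_dth. auto_derive; auto. ring. Qed.

Lemma continuity_2d_contour_re_dth (th u : R) : continuity_2d_pt contour_re_dth th u.
Proof.
  unfold contour_re_dth.
  repeat first
    [ apply continuity_2d_pt_mult | apply continuity_2d_pt_plus | apply continuity_2d_pt_opp
    | apply continuity_2d_pt_id1 | apply continuity_2d_pt_id2 | apply continuity_2d_pt_const
    | apply (continuity_1d_2d_pt_comp exp); [apply derivable_continuous_pt, derivable_pt_exp|]
    | apply (continuity_1d_2d_pt_comp cos); [apply derivable_continuous_pt, derivable_pt_cos|]
    | apply (continuity_1d_2d_pt_comp sin); [apply derivable_continuous_pt, derivable_pt_sin|]
    | apply (continuity_1d_2d_pt_comp cosh); [apply derivable_continuous_pt, derivable_pt_cosh|]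
    | apply (continuity_1d_2d_pt_comp sinh); [apply derivable_continuous_pt, derivable_pt_sinh|] ].
Qed.

Lemma is_derive_RInt_contour_re (th : R) :
  is_derive (fun z => RInt (fun u => contour_re z u) 0 U) th (- contour_im th U).
Proof.
  replace (- contour_im th U) with (RInt (fun u => Derive (fun z => contour_re z u) th) 0 U).
  - apply (is_derive_RInt_param (fun z u => contour_re z u)).
    + apply filter_forall. intros z v _. eexists. apply is_derive_contour_re_th.
    + intros v _. apply (continuity_2d_pt_ext contour_re_dth).
      * intros x y. symmetry. apply is_derive_unique, is_derive_contour_re_th.
      * apply continuity_2d_contour_re_dth.
    + apply filter_forall. intros z. apply (@ex_RInt_continuous R_CompleteNormedModule).
      intros u _. apply (ex_derive_continuous (fun u => contour_re z u)).
      unfold contour_re. auto_derive. auto.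
  - rewrite (RInt_ext _ (contour_re_dth th)) by (intros x _; apply is_derive_unique, is_derive_contour_re_th).
    apply is_RInt_unique.
    replace (- contour_im th U) with (minus (- contour_im th U) (- contour_im th 0)).
    + apply (@is_RInt_derive R_CompleteNormedModule (fun z => - contour_im th z)).
      * intros; apply is_derive_contour_im_u.
      * intros u _. apply (ex_derive_continuous (contour_re_dth th)).
        unfold contour_re_dth. auto_derive. auto.
    + unfold contour_im. rewrite sinh_0, Rmult_0_r, Rmult_0_l, sin_0, Rmult_0_r.
      unfold minus, plus, opp; simpl. ring.
Qed.

Lemma continuous_contour_im (th : R) : continuous (fun z => - contour_im z U) th.
Proof.
  apply (ex_derive_continuous (fun z => - contour_im z U)). unfold contour_im. auto_derive. auto.
Qed.

Lemma contour_shift :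
  K0_partial t U - RInt (fun u => cos (t * sinh u)) 0 U
  = RInt (fun th => - contour_im th U) 0 (PI / 2).
Proof.
  unfold K0_partial. symmetry. apply (is_RInt_unique (V := R_CompleteNormedModule)).
  replace (RInt (fun u => exp (- t * cosh u)) 0 U) with (RInt (contour_re (PI / 2)) 0 U)
    by (apply RInt_ext; intros x _; unfold contour_re;
        rewrite sin_PI2, cos_PI2, Rmult_0_r, cos_0, !Rmult_1_r; reflexivity).
  replace (RInt (fun u => cos (t * sinh u)) 0 U) with (RInt (contour_re 0) 0 U)
    by (apply RInt_ext; intros x _; unfold contour_re;
        rewrite sin_0, cos_0, Rmult_0_r, exp_0, !Rmult_1_r, Rmult_1_l; reflexivity).
  apply (@is_RInt_derive R_CompleteNormedModule (fun z => RInt (fun u => contour_re z u) 0 U)).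
  - intros; apply is_derive_RInt_contour_re.
  - intros; apply continuous_contour_im.
Qed.

(* On the vertical side [|Im| <= exp (- t cosh U sin th)], and [sin th >= th / 3]. *)

Lemma contour_side_bound :
  Rabs (RInt (fun th => - contour_im th U) 0 (PI / 2)) <= 3 / (t * cosh U).
Proof.
  pose proof PI2_1. pose proof (cosh_pos U).
  set (c := t * cosh U / 3).
  assert (Hc : 0 < c) by (unfold c; apply Rdiv_lt_0_compat; [apply Rmult_lt_0_compat|]; lra).
  eapply Rle_trans; [apply abs_RInt_le; [lra | apply (@ex_RInt_continuous R_CompleteNormedModule);
                                           intros; apply continuous_contour_im]|].
  eapply Rle_trans.
  - apply (RInt_le _ (fun z => exp (- c * z))); [lra | | eexists; apply is_RInt_exp_lin, Hc |].
    + apply (@ex_RInt_continuous R_CompleteNormedModule). intros z _.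
      apply (continuous_comp (fun z => - contour_im z U) Rabs);
        [apply continuous_contour_im | apply continuous_Rabs].
    + intros x Hx. rewrite Rabs_Ropp. unfold contour_im.
      rewrite Rabs_mult, (Rabs_right (exp _)) by (apply Rle_ge, Rlt_le, exp_pos).
      assert (Rabs (sin (t * sinh U * cos x)) <= 1) by apply Rabs_le, SIN_bound.
      pose proof (exp_pos (- t * cosh U * sin x)).
      apply Rle_trans with (exp (- t * cosh U * sin x)); [nra|].
      apply exp_le_exp. pose proof (sin_ge_third x ltac:(lra)). unfold c.
      assert (0 < t * cosh U) by (apply Rmult_lt_0_compat; lra). nra.
  - rewrite (is_RInt_unique _ _ _ _ (is_RInt_exp_lin c (PI / 2) Hc)).
    replace (3 / (t * cosh U)) with (1 / c) by (unfold c; field; lra).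
    pose proof (exp_pos (- c * (PI / 2))). apply Rmult_le_compat_r; [|lra].
    left. apply Rinv_0_lt_compat, Hc.
Qed.

End Contour.

Lemma cos_int_0_sinh (t U : R) :
  cos_int t 0 (sinh U) = RInt (fun u => cos (t * sinh u)) 0 U.
Proof.
  unfold cos_int. rewrite <- sinh_0 at 1. symmetry.
  apply is_RInt_unique, (is_RInt_ext (fun u => cosh u * (G_deriv 0 (sinh u) * cos (t * sinh u)))).
  - intros u _. rewrite G_deriv_0. unfold G. rewrite <- cosh_sqr, sqrt_pow2 by (left; apply cosh_pos).
    simpl. field. apply Rgt_not_eq, cosh_pos.
  - apply (@is_RInt_comp R_CompleteNormedModule (fun y => G_deriv 0 y * cos (t * y)) sinh cosh).
    + intros; apply continuous_G_deriv_cos.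
    + intros u _. split.
      * apply is_derive_Reals, derivable_pt_lim_sinh.
      * apply (ex_derive_continuous cosh). auto_derive. auto.
Qed.

Lemma is_lim_RInt_cos_sinh (t : R) : 0 < t ->
  is_lim (fun U => RInt (fun u => cos (t * sinh u)) 0 U) p_infty (K0 t).
Proof.
  intros Ht.
  assert (Hdiff : is_lim (fun U => RInt (fun u => cos (t * sinh u)) 0 U - K0_partial t U) p_infty 0).
  { apply (is_lim_p_infty_0_of_le_inv _ (3 / t)). intros U HU.
    rewrite Rabs_minus_sym, contour_shift.
    eapply Rle_trans; [apply contour_side_bound, Ht|].
    pose proof (cosh_ge_id U ltac:(lra)).
    unfold Rdiv. rewrite Rinv_mult, Rmult_assoc.
    apply Rmult_le_compat_l; [lra|].
    apply Rmult_le_compat_l; [left; apply Rinv_0_lt_compat, Ht|].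
    apply Rinv_le_contravar; lra. }
  apply (is_lim_ext (fun U => K0_partial t U + (RInt (fun u => cos (t * sinh u)) 0 U - K0_partial t U)));
    [intros; ring|].
  rewrite <- (Rplus_0_r (K0 t)). apply is_lim_plus'; [apply is_lim_K0_partial, Ht | exact Hdiff].
Qed.

Lemma is_lim_cos_int_0 (t : R) : 0 < t -> is_lim (cos_int t 0) p_infty (K0 t).
Proof.
  intros Ht.
  apply (is_lim_ext (fun Y => RInt (fun u => cos (t * sinh u)) 0 (arcsinh Y))).
  { intros Y. rewrite <- cos_int_0_sinh, sinh_arcsinh. reflexivity. }
  apply (is_lim_comp _ arcsinh p_infty (K0 t) p_infty);
    [apply is_lim_RInt_cos_sinh, Ht | apply is_lim_arcsinh | exists 0; intros; discriminate].
Qed.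

Theorem mainTheorem7 (a t : R) (ht : 0 < t) :
  is_RInt_gen (fun y => rhs_integrand a t y) (at_point 0) (Rbar_locally p_infty)
    (K0 t * ber (a * sqrt t)).
Proof.
  change (fun y => rhs_integrand a t y) with (rhs_integrand a t).
  set (C := cosh (a ^ 2 / 4 * (2 * (1 + t)))).
  set (b := ber (a * sqrt t)).
  apply is_RInt_gen_p_infty_of_is_lim; [intros Y; apply (RInt_rhs_integrand_approx a t Y ht)|].
  apply (is_lim_ext (fun Y => b * cos_int t 0 Y + (RInt (rhs_integrand a t) 0 Y - b * cos_int t 0 Y)));
    [intros; ring|].
  replace (K0 t * b) with (b * K0 t + 0) by ring.
  apply is_lim_plus'.
  - apply (is_lim_scal_l _ b _ (K0 t)), is_lim_cos_int_0, ht.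
  - apply (is_lim_p_infty_0_of_le_inv _ C). intros Y HY.
    destruct (RInt_rhs_integrand_approx a t Y ht) as [_ Hbound].
    eapply Rle_trans; [exact Hbound|].
    apply Rmult_le_compat_l; [left; apply cosh_pos | apply G_le_inv, HY].
Qed.
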